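(* Let $r,s,q$ be positive integers. There is a constant $c=c(r,s,q)>0$ such that the following holds. Let $V$ be a set of $N$ vertices and let $\gamma$ be a function assigning to every $r$-element subset $f\subset V$ a vector $\gamma(f)\in\mathbb{R}^s$. Suppose that for every $r$-element subset $f\subset V$ there are at most $q$ $r$-element subsets $f'\subset V$ with $|f\cap f'|=r-1$ such that $|\gamma(f)_i-\gamma(f')_i|<1$ for some $i\in[s]$. Then there is $U\subset V$ with $|U|\ge cN^{1/(2r-1)}$ such that $|\gamma(f)_i-\gamma(f')_i|\ge 1$ for every pair of distinct $r$-element subsets $f,f'\subset U$ and every $i\in[s]$. *)

From HB Require Import structures.
From mathcomp Require Import all_boot all_order all_algebra.
From mathcomp Require Import all_classical all_reals all_analysis.
Set Implicit Arguments. Unset Strict Implicit. Unset Printing Implicit Defensive.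
Import Order.TTheory GRing.Theory Num.Theory.
Local Open Scope ring_scope.

(* gamma assigns to each (r-element) subset of V a vector in R^s,
   represented as a function 'I_s -> R. *)

Definition close (R : realType) (V : finType) (s : nat)
  (gamma : {set V} -> 'I_s -> R) (f f' : {set V}) : bool :=
  [exists i : 'I_s, `|gamma f i - gamma f' i| < 1].

Definition close_nbrs (R : realType) (V : finType) (r s : nat)
  (gamma : {set V} -> 'I_s -> R) (f : {set V}) : {set {set V}} :=
  [set f' : {set V} | [&& #|f'| == r, #|f :&: f'| == r.-1 & close gamma f f']].

From Pilot Require Import Defs.
From HB Require Import structures.
From mathcomp Require Import all_boot all_order all_algebra.
From mathcomp Require Import all_classical all_reals all_analysis.
From mathcomp Require Import unstable lra ring zify.
Import Order.TTheory GRing.Theory Num.Theory.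
Set Implicit Arguments.
Unset Strict Implicit.
Unset Printing Implicit Defensive.
Local Open Scope ring_scope.

(* Alteration method.  Keep each vertex independently with probability
   p = t / N and call (f, T, v) bad when |f| = r, |T| = r - 1, v lies outside
   f and T, and f is close to v |: T.  Deleting v for every bad triple inside
   the random set S leaves a separated set: if two distinct r-sets f, f' of the
   remainder were close, any v in f' :\: f would give the bad triple
   (f, f' :\ v, v).  For fixed f and T at most s (2q + 2) vertices v make
   (f, T, v) bad: for a fixed coordinate i, the sets v |: T whose i-th value
   lies in [gamma f i, gamma f i + 1) are pairwise close neighbours, so there
   are at most q + 1 of them, and likewise below gamma f i.  Weighting the
   pairs (f, T) by t^-(|f| + |T|) bounds the expected number of bad triples by
   s (2q + 2) p t^(2r-1) (1 + p (2/t + 1/t^2))^N <= s (2q + 2) e^3 t^(2r-1) p,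
   which is at most t / 2 = E|S| / 2 when t^(2r-1) = N / (2 s (2q + 2) e^3). *)

Section SetWeight.
Variables (R : comNzRingType) (V : finType).

Lemma sum_set_prod (g : V -> bool -> R) :
  \sum_(S : {set V}) \prod_(v : V) g v (v \in S) =
  \prod_(v : V) (g v true + g v false).
Proof.
under [RHS]eq_bigr => v _ do rewrite -big_bool.
rewrite bigA_distr_bigA (reindex (fun S : {set V} => [ffun v => v \in S])) /=.
  by apply: eq_bigr => S _; apply: eq_bigr => v _; rewrite ffunE.
exists (fun h : {ffun V -> bool} => [set v | h v]) => [S _|h _].
  by apply/setP => v; rewrite inE ffunE.
by apply/ffunP => v; rewrite ffunE inE.
Qed.

Lemma sum_in_natr (A : {set V}) : \sum_(v : V) ((v \in A)%:R : R) = #|A|%:R.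
Proof.
by rewrite -sum1_card natr_sum [RHS]big_mkcond; apply: eq_bigr => v _; case: (v \in A).
Qed.

Definition set_weight (p : R) (S : {set V}) : R :=
  \prod_(v : V) (if v \in S then p else 1 - p).

Lemma sum_set_weight_subset (p : R) (W : {set V}) :
  \sum_(S : {set V}) set_weight p S * (W \subset S)%:R = p ^+ #|W|.
Proof.
pose g v (b : bool) := if b then p else if v \in W then 0 else 1 - p.
transitivity (\sum_(S : {set V}) \prod_(v : V) g v (v \in S)).
  apply: eq_bigr => S _; rewrite /set_weight /g.
  have [sWS|/fintype.subsetPn[v vW vS]] := boolP (W \subset S).
    rewrite mulr1; apply: eq_bigr => v _.
    by case: (boolP (v \in W)) => // /(fintype.subsetP sWS) ->.
  by rewrite mulr0 (bigD1 v) //= vW (negbTE vS) mul0r.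
rewrite sum_set_prod /g -(prodr_const _ p) [RHS]big_mkcond.
by apply: eq_bigr => v _; case: (v \in W); rewrite ?addr0 // addrC subrK.
Qed.

Lemma sum_set_weight (p : R) : \sum_(S : {set V}) set_weight p S = 1.
Proof.
rewrite -(expr0 p) -(cards0 V) -sum_set_weight_subset.
by apply: eq_bigr => S _; rewrite finset.sub0set mulr1.
Qed.

Lemma sum_set_weight_card (p : R) :
  \sum_(S : {set V}) set_weight p S * #|S|%:R = #|V|%:R * p.
Proof.
under eq_bigr => S _ do rewrite -sum_in_natr mulr_sumr.
rewrite exchange_big /= mulr_natl -sumr_const.
apply: eq_bigr => v _; rewrite -[RHS]expr1 -(cards1 v) -sum_set_weight_subset.
by apply: eq_bigr => S _; rewrite finset.sub1set.
Qed.

Lemma sum_pair_weight (p y : R) :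
  \sum_(f : {set V}) \sum_(T : {set V}) y ^+ #|f| * y ^+ #|T| * p ^+ #|f :|: T|
  = (1 + p * (2 * y + y ^+ 2)) ^+ #|V|.
Proof.
pose phi (a b : bool) :=
  (if a then y else 1) * (if b then y else 1) * (if a || b then p else 1).
have prod_if (A : {set V}) x : \prod_(v : V) (if v \in A then x else 1) = x ^+ #|A|.
  by rewrite -big_mkcond prodr_const.
transitivity (\sum_(f : {set V}) \sum_(T : {set V})
                \prod_(v : V) phi (v \in f) (v \in T)).
  apply: eq_bigr => f _; apply: eq_bigr => T _.
  rewrite /phi !big_split /= -!prod_if.
  by congr (_ * _); apply: eq_bigr => v _; rewrite finset.in_setU.
under eq_bigr => f _ do rewrite (sum_set_prod (fun v b => phi (v \in f) b)).
rewrite (sum_set_prod (fun v a => phi a true + phi a false)) prodr_const.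
by congr (_ ^+ _); rewrite /phi /=; ring.
Qed.

End SetWeight.

Lemma set_weight_ge0 (R : numDomainType) (V : finType) (p : R) (S : {set V}) :
  0 <= p <= 1 -> 0 <= set_weight p S.
Proof.
by case/andP=> p0 p1; apply: prodr_ge0 => v _; case: ifP; rewrite ?subr_ge0.
Qed.

Lemma exists_ge_average (R : realDomainType) (V : finType) (p : R)
    (Z : {set V} -> R) :
  0 <= p <= 1 -> exists S, \sum_(S' : {set V}) set_weight p S' * Z S' <= Z S.
Proof.
move=> p01; have [S _ maxS] := @arg_maxP _ R {set V} finset.set0 xpredT Z isT.
exists S; rewrite -[leRHS]mul1r -(sum_set_weight V p) mulr_suml.
by apply: ler_sum => S' _; apply: ler_wpM2l; [exact: set_weight_ge0 | exact: maxS].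
Qed.

Lemma sum_sized_pairs_le (R : numFieldType) (V : finType) (m n : nat) (p t : R) :
  0 <= p -> 0 < t ->
  \sum_(f : {set V}) \sum_(T : {set V})
     (if (#|f| == m) && (#|T| == n) then p ^+ #|f :|: T| else 0)
  <= t ^+ (m + n) * (1 + p * (2 * t^-1 + t^-1 ^+ 2)) ^+ #|V|.
Proof.
move=> p0 t0; rewrite -sum_pair_weight mulr_sumr; apply: ler_sum => f _.
rewrite mulr_sumr; apply: ler_sum => T _.
have tV0 : 0 <= t^-1 by rewrite invr_ge0 ltW.
case: ifP => [/andP[/eqP-> /eqP->]|_]; last by rewrite !mulr_ge0 ?exprn_ge0 // ltW.
by rewrite mulrA -exprD -exprMn mulfV ?gt_eqF // expr1n mul1r.
Qed.

Lemma exprn_le_expR (R : realType) (z : R) (n : nat) :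
  0 <= z -> (1 + z) ^+ n <= expR (n%:R * z).
Proof.
move=> z0; rewrite expRM_natl; apply: lerXn2r; rewrite ?nnegrE ?expR_ge0 //.
- by lra.
- exact: expR_ge1Dx.
Qed.

Lemma pair_weight_pow_le_expR3 (R : realType) (n : nat) (p t : R) :
  0 <= p -> 1 <= t -> n%:R * p = t ->
  (1 + p * (2 * t^-1 + t^-1 ^+ 2)) ^+ n <= expR 3.
Proof.
move=> p0 t1 np; have t0 : 0 < t by lra.
have y0 : 0 <= p * (2 * t^-1 + t^-1 ^+ 2).
  by rewrite mulr_ge0 // addr_ge0 ?exprn_ge0 ?mulr_ge0 ?invr_ge0 //; lra.
apply: le_trans (exprn_le_expR _ y0) _; rewrite ler_expR mulrA np.
have -> : t * (2 * t^-1 + t^-1 ^+ 2) = 2 + t^-1 by field; rewrite gt_eqF.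
have : t^-1 <= 1 by rewrite invr_le1 // unitfE gt_eqF.
lra.
Qed.

Section Separation.
Variables (R : realType) (V : finType) (r s q : nat).
Variable gamma : {set V} -> 'I_s -> R.
Hypothesis r_gt0 : (0 < r)%N.
Hypothesis card_close_nbrs_le :
  forall f : {set V}, #|f| = r -> (#|close_nbrs r gamma f| <= q)%N.

Local Notation M := ((s * (2 * q.+1))%:R : R).

Definition separated (U : {set V}) : Prop :=
  forall f f' : {set V}, f \subset U -> f' \subset U ->
    #|f| = r -> #|f'| = r -> f != f' ->
    forall i : 'I_s, 1 <= `|gamma f i - gamma f' i|.

Lemma separated_card_le1 (U : {set V}) : (#|U| <= 1)%N -> separated U.
Proof.
move=> U1 f f' fU f'U cf cf'.
have eqU (g : {set V}) : g \subset U -> #|g| = r -> g = U.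
  by move=> gU cg; apply/eqP; rewrite eqEcard gU cg (leq_trans U1).
by rewrite (eqU f fU cf) (eqU f' f'U cf') eqxx.
Qed.

Lemma card_setU1_pred (T : {set V}) (v : V) :
  #|T| = r.-1 -> v \notin T -> #|v |: T| = r.
Proof. by move=> cT vT; rewrite cardsU1 vT cT add1n prednK. Qed.

Lemma card_close_cluster_le (T X : {set V}) (i : 'I_s) :
  #|T| = r.-1 -> [disjoint X & T] ->
  {in X &, forall v v', `|gamma (v |: T) i - gamma (v' |: T) i| < 1} ->
  (#|X| <= q.+1)%N.
Proof.
move=> cT dXT closeX.
have [->|[v0 v0X]] := set_0Vmem X; first by rewrite cards0.
have notT v : v \in X -> v \notin T by move=> vX; rewrite (disjointFr dXT vX).
rewrite (cardsD1 v0) v0X add1n ltnS.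
apply: leq_trans (card_close_nbrs_le (card_setU1_pred cT (notT _ v0X))).
rewrite -(@card_in_imset _ _ (fun v => v |: T) (X :\ v0)); last first.
  move=> a b /setD1P[_ aX] /setD1P[_ bX] /= eqab.
  have : a \in b |: T by rewrite -eqab setU11.
  by rewrite in_setU1 (negbTE (notT _ aX)) orbF => /eqP.
apply/subset_leq_card/fintype.subsetP => _ /imsetP[v /setD1P[vv0 vX] ->].
rewrite inE (card_setU1_pred cT (notT _ vX)) eqxx /=.
have -> : (v0 |: T) :&: (v |: T) = T.
  apply/setP => z; rewrite !inE; case: (boolP (z \in T)) => zT; rewrite ?orbT //.
  by rewrite !orbF; apply: contraNF vv0 => /andP[/eqP-> /eqP->].
rewrite cT eqxx /=.
by apply/existsP; exists i; apply: closeX.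
Qed.

Definition close_extensions (f T : {set V}) : {set V} :=
  [set v | (v \notin T) && Defs.close gamma f (v |: T)].

Lemma card_close_extensions_le (f T : {set V}) :
  #|T| = r.-1 -> (#|close_extensions f T| <= s * (2 * q.+1))%N.
Proof.
move=> cT.
pose above i := [set v | (v \notin T) &&
                         (gamma f i <= gamma (v |: T) i < gamma f i + 1)].
pose below i := [set v | (v \notin T) &&
                         (gamma f i - 1 < gamma (v |: T) i < gamma f i)].
have disjT (P : pred V) : [disjoint [set v | (v \notin T) && P v] & T].
  by rewrite disjoint_subset; apply/fintype.subsetP => v; rewrite !inE => /andP[].
have cover :
    close_extensions f T \subset \bigcup_(i : 'I_s) (above i :|: below i).
  apply/fintype.subsetP => v; rewrite inE => /andP[vT /existsP[i]].
  rewrite ltr_norml => /andP[lo hi]; apply/bigcupP; exists i => //.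
  by rewrite !inE vT /=; case: (lerP (gamma f i) (gamma (v |: T) i)) => ?;
    apply/orP; [left|right]; apply/andP; split => //; lra.
apply: leq_trans (subset_leq_card cover) _; apply: leq_trans (card_big_setU _ _ _) _.
rewrite -[X in (_ <= X * _)%N]card_ord -sum_nat_const; apply: leq_sum => i _.
rewrite mul2n -addnn (leq_trans (leq_card_setU _ _)) // leq_add //.
  apply: card_close_cluster_le cT (disjT _) _ => v v'.
  by rewrite !inE => /and3P[_ ? ?] /and3P[_ ? ?]; rewrite ltr_norml; lra.
apply: card_close_cluster_le cT (disjT _) _ => v v'.
by rewrite !inE => /and3P[_ ? ?] /and3P[_ ? ?]; rewrite ltr_norml; lra.
Qed.

Definition bad_triple (f T : {set V}) (v : V) : bool :=
  [&& #|f| == r, #|T| == r.-1, v \notin T, v \notin f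
    & Defs.close gamma f (v |: T)].

Definition bad_count (S : {set V}) : R :=
  \sum_(f : {set V}) \sum_(T : {set V}) \sum_(v : V)
     (bad_triple f T v && (v |: (f :|: T) \subset S))%:R.

Definition bad_vertices (S : {set V}) : {set V} :=
  [set v | [exists f, exists T, bad_triple f T v && (v |: (f :|: T) \subset S)]].

Lemma card_bad_vertices_le (S : {set V}) : #|bad_vertices S|%:R <= bad_count S.
Proof.
rewrite /bad_count; under eq_bigr => f _ do rewrite exchange_big.
rewrite exchange_big -sum_in_natr; apply: ler_sum => v _.
have sum_ge0 (F : {set V} -> {set V} -> bool) :
  0 <= \sum_(f : {set V}) \sum_(T : {set V}) (F f T)%:R :> R.
  by rewrite sumr_ge0 // => f _; rewrite sumr_ge0.
have [|] := boolP (v \in bad_vertices S); last by rewrite sum_ge0.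
rewrite inE => /existsP[f /existsP[T bad]].
rewrite (bigD1 f) //= (bigD1 T) //= bad -addrA lerDl addr_ge0 ?sumr_ge0 //.
by move=> f' _; rewrite sumr_ge0.
Qed.

Lemma separated_setD_bad_vertices (S : {set V}) :
  separated (S :\: bad_vertices S).
Proof.
move=> f f' fU f'U cf cf' neqff' i; rewrite leNgt; apply/negP => close_i.
have /fintype.subsetPn[v vf' vf] : ~~ (f' \subset f).
  by apply: contra neqff' => f'f; rewrite eq_sym eqEcard f'f cf cf' leqnn.
have inU x : x \in f' -> x \in S /\ x \notin bad_vertices S.
  by move=> /(fintype.subsetP f'U); rewrite finset.in_setD => /andP[].
have cT : #|f' :\ v| = r.-1 by rewrite -cf' (cardsD1 v f') vf'.
have bad : bad_triple f (f' :\ v) v.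
  rewrite /bad_triple finset.setD1K // cf cT !eqxx finset.setD11 vf.
  by apply/existsP; exists i.
have [_] := inU v vf'; rewrite inE; apply/negP/negPn/existsP.
exists f; apply/existsP; exists (f' :\ v); rewrite bad /=.
apply/fintype.subsetP => x.
rewrite finset.in_setU1 finset.in_setU finset.in_setD1 => /or3P[/eqP->|xf|/andP[_]].
- by have [] := inU v vf'.
- by have := fintype.subsetP fU x xf; rewrite finset.in_setD => /andP[].
- by move=> /inU[].
Qed.

Lemma expected_bad_count (p : R) :
  \sum_(S : {set V}) set_weight p S * bad_count S =
  \sum_(f : {set V}) \sum_(T : {set V}) \sum_(v : V)
     (bad_triple f T v)%:R * p ^+ #|v |: (f :|: T)|.
Proof.
rewrite /bad_count; under eq_bigr => S _ do rewrite mulr_sumr.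
rewrite exchange_big; apply: eq_bigr => f _.
under eq_bigr => S _ do rewrite mulr_sumr.
rewrite exchange_big; apply: eq_bigr => T _.
under eq_bigr => S _ do rewrite mulr_sumr.
rewrite exchange_big; apply: eq_bigr => v _.
case: (bad_triple f T v); rewrite ?mul1r -?sum_set_weight_subset //.
by rewrite mul0r big1 // => S _; rewrite mulr0.
Qed.

Lemma sum_bad_triple_le (p : R) (f T : {set V}) : 0 <= p ->
  \sum_(v : V) (bad_triple f T v)%:R * p ^+ #|v |: (f :|: T)| <=
  (if (#|f| == r) && (#|T| == r.-1) then M * p ^+ (#|f :|: T|).+1 else 0).
Proof.
move=> p0; case: ifP => [/andP[/eqP cf /eqP cT]|sizes]; last first.
  rewrite big1 // => v _; rewrite /bad_triple.
  by case/nandP: (negbT sizes) => /negbTE-> ; rewrite ?andbF mul0r.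
apply: (@le_trans _ _ (\sum_(v : V)
    (v \in close_extensions f T)%:R * p ^+ (#|f :|: T|).+1)).
  apply: ler_sum => v _; rewrite /bad_triple.
  case: (boolP [&& _, _, _, _ & _]) => [|_]; last by rewrite mul0r mulr_ge0 ?exprn_ge0.
  case/and5P=> _ _ vT vf closev.
  by rewrite inE vT closev cardsU1 finset.in_setU negb_or vT vf.
rewrite -mulr_suml sum_in_natr ler_wpM2r ?exprn_ge0 // ler_nat.
exact: card_close_extensions_le.
Qed.

Lemma expected_bad_count_le (p t : R) : 0 <= p -> 0 < t ->
  \sum_(S : {set V}) set_weight p S * bad_count S <=
  M * p * (t ^+ (r + r.-1) * (1 + p * (2 * t^-1 + t^-1 ^+ 2)) ^+ #|V|).
Proof.
move=> p0 t0; rewrite expected_bad_count.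
apply: le_trans (ler_wpM2l _ (sum_sized_pairs_le V r r.-1 p0 t0)); last first.
  by rewrite mulr_ge0.
rewrite mulr_sumr; apply: ler_sum => f _; rewrite mulr_sumr; apply: ler_sum => T _.
apply: le_trans (sum_bad_triple_le f T p0) _.
by case: ifP; rewrite ?mulr0 // exprS mulrA.
Qed.

Lemma card_setD_bad_vertices_ge (S : {set V}) :
  #|S|%:R - bad_count S <= #|S :\: bad_vertices S|%:R.
Proof.
have : (#|S| <= #|S :\: bad_vertices S| + #|bad_vertices S|)%N.
  by rewrite -(cardsID (bad_vertices S) S) addnC leq_add2l subset_leq_card ?subsetIr.
rewrite -(ler_nat R) natrD; have := card_bad_vertices_le S; lra.
Qed.

Lemma exists_large_separated (t : R) : (0 < s)%N -> 1 <= t ->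
  2 * M * expR 3 * t ^+ (r + r.-1) <= #|V|%:R ->
  exists U, separated U /\ t / 2 <= #|U|%:R.
Proof.
move=> s_gt0 t1; set N : R := #|V|%:R; set k := t ^+ (r + r.-1) => tN.
have M1 : 1 <= M by rewrite ler1n muln_gt0 s_gt0.
have e3 : 1 <= expR 3 :> R by rewrite -[X in X <= _]expR0 ler_expR; lra.
have tk : t <= k by rewrite ler_eXnr //; lia.
have k0 : 0 <= k by lra.
have tN' : t <= N.
  have Me : 1 <= 2 * M * expR 3 by nra.
  by apply: (le_trans tk); apply: le_trans tN; rewrite ler_peMl.
have t0 : 0 < t by lra.
set p := t / N; have Np : N * p = t by rewrite mulrC divfK // gt_eqF //; lra.
have p01 : 0 <= p <= 1 by rewrite divr_ge0 ?ler_pdivrMr ?mul1r; lra.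
have p0 : 0 <= p by case/andP: p01.
have Ecount : \sum_(S : {set V}) set_weight p S * bad_count S <= t / 2.
  apply: le_trans (expected_bad_count_le p0 t0) _.
  apply: (@le_trans _ _ (M * p * (k * expR 3))).
    apply: ler_wpM2l; first by rewrite mulr_ge0 //; lra.
    by apply: ler_wpM2l; last exact: pair_weight_pow_le_expR3 p0 t1 Np.
  have := ler_wpM2r p0 tN; rewrite Np; lra.
have [S maxS] := exists_ge_average (fun S => #|S|%:R - bad_count S) p01.
exists (S :\: bad_vertices S); split; first exact: separated_setD_bad_vertices.
apply: le_trans (card_setD_bad_vertices_ge S); apply: le_trans maxS.
under eq_bigr => S' _ do rewrite mulrBr.
by rewrite sumrB sum_set_weight_card Np; lra.
Qed.

End Separation.

Theorem lemma2p7 (R : realType) (r s q : nat) :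
  (0 < r)%N -> (0 < s)%N -> (0 < q)%N ->
  exists c : R, 0 < c /\
    forall (V : finType) (gamma : {set V} -> 'I_s -> R),
      (forall f : {set V}, #|f| = r -> (#|close_nbrs r gamma f| <= q)%N) ->
      exists U : {set V},
        c * (#|V|%:R) `^ (1 / (2 * r - 1)%:R) <= #|U|%:R /\
        forall f f' : {set V}, f \subset U -> f' \subset U ->
          #|f| = r -> #|f'| = r -> f != f' ->
          forall i : 'I_s, 1 <= `|gamma f i - gamma f' i|.
Proof.
move=> r_gt0 s_gt0 _; have -> : (2 * r - 1 = r + r.-1)%N by lia.
set a : R := 1 / (r + r.-1)%:R.
set K : R := 2 * (s * (2 * q.+1))%:R * expR 3.
have K_gt0 : 0 < K by rewrite !mulr_gt0 ?expR_gt0 // ltr0n muln_gt0 s_gt0.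
exists (K^-1 `^ a / 2); split; first by rewrite divr_gt0 // powR_gt0 // invr_gt0.
move=> V gamma nbrs_le; set N : R := #|V|%:R; set t := (N / K) `^ a.
have -> : K^-1 `^ a / 2 * N `^ a = t / 2.
  by rewrite /t mulrC powRM ?mulrA // ?invr_ge0 ltW.
have a_neq0 : a != 0 by rewrite /a mul1r invr_eq0 pnatr_eq0 -lt0n; lia.
have [t_lt1|t_ge1] := ltrP t 1.
  have [V0|[v _]] := set_0Vmem [set: V].
    exists finset.set0; split.
      by rewrite /t /N -cardsT V0 cards0 mul0r powR0 // mul0r.
    by apply: (separated_card_le1 gamma r_gt0); rewrite cards0.
  exists [set v]; split; last by apply: (separated_card_le1 gamma r_gt0); rewrite cards1.
  by rewrite cards1; lra.
have tK : t ^+ (r + r.-1) = N / K.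
  rewrite /t -powR_mulrn ?powR_ge0 // -powRrM /a mul1r mulVf ?powRr1 //.
    by rewrite divr_ge0 // ltW.
  by rewrite pnatr_eq0 -lt0n; lia.
have tN : K * t ^+ (r + r.-1) <= N by rewrite tK mulrC divfK ?gt_eqF.
have [U [sepU cardU]] := exists_large_separated r_gt0 nbrs_le s_gt0 t_ge1 tN.
by exists U.
Qed.
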